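(* The relations $\equiv_{\tt CS}$ and $\equiv_{\tt o}$ are strong bisimulations for $(\mathcal T,\to_{\lambda j})$, where $\mathcal T$ is the set of $\lambda j$-terms.
   Context: $\lambda j$-terms are generated by $t,u::= x\mid \lambda x.t\mid t\,u\mid t[x/u]$ ($x$ ranging over variables); $\lambda x.t$ and $t[x/u]$ bind $x$ in $t$ (not in $u$), and terms are considered modulo $\alpha$-conversion. $\mathrm{fv}(t)$ is the set of free variables, $t\{x/u\}$ is capture-avoiding meta-level substitution, and $|t|_x$ is the number of free occurrences of $x$ in $t$. If $|t|_x=n\ge2$, $t_{[y]_x}$ denotes any term obtained from $t$ by replacing $k$ of the free occurrences of $x$ by a fresh variable $y$, for some $1\le k\le n-1$. ${\tt L}$ denotes a (possibly empty) list of jumps $[x_1/u_1]\dots[x_k/u_k]$. The rewriting rules, closed under all contexts, are: $({\tt dB})$ $(\lambda x.t){\tt L}\,u\to t[x/u]{\tt L}$ where no $x_i$ of ${\tt L}$ is free in $u$; $({\tt w})$ $t[x/u]\to t$ if $|t|_x=0$; $({\tt d})$ $t[x/u]\to t\{x/u\}$ if $|t|_x=1$; $({\tt c})$ $t[x/u]\to t_{[y]_x}[x/u][y/u]$ if $|t|_x\ge2$, $y$ fresh. $\to_{\lambda j}$ is the union of all four. $\equiv_{\tt CS}$ is the smallest equivalence closed under contexts containing $t[x/s][y/v]\sim t[y/v][x/s]$ whenever $x\notin\mathrm{fv}(v)$ and $y\notin\mathrm{fv}(s)$. $\equiv_{\tt o}$ (graphical equivalence) is the smallest equivalence closed under contexts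 containing that equation together with $\lambda y.(t[x/s])\sim(\lambda y.t)[x/s]$ if $y\notin\mathrm{fv}(s)$, and $t[x/s]\,v\sim(t\,v)[x/s]$ if $x\notin\mathrm{fv}(v)$. A strong bisimulation for a reduction system $(S,\to)$ is a relation ${\tt E}\subseteq S\times S$ such that whenever $s\,{\tt E}\,t$: if $s\to s'$ then there is $t'$ with $t\to t'$ and $s'\,{\tt E}\,t'$, and if $t\to t'$ then there is $s'$ with $s\to s'$ and $s'\,{\tt E}\,t'$. *)

(* lambda-j terms modulo alpha-conversion, represented with
   de Bruijn indices (each de Bruijn term is exactly one alpha-class). *)
From Stdlib Require Import Arith List.

(* t ::= x | \x.t | t u | t[x/u]   ;  in [Sub t u] the index 0 of [t] is x. *)
Inductive term : Type :=
| Var : nat -> term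
| Lam : term -> term
| App : term -> term -> term
| Sub : term -> term -> term.

Fixpoint lift (c : nat) (t : term) : term :=
  match t with
  | Var n => if c <=? n then Var (S n) else Var n
  | Lam t1 => Lam (lift (S c) t1)
  | App t1 t2 => App (lift c t1) (lift c t2)
  | Sub t1 t2 => Sub (lift (S c) t1) (lift c t2)
  end.

Fixpoint liftn (k : nat) (u : term) : term :=
  match k with
  | 0 => u
  | S k' => lift 0 (liftn k' u)
  end.

(* capture-avoiding meta-level substitution t{k/u} (u is seen from the
   context of the binder of k); indices above k are decremented *)
Fixpoint subst (k : nat) (u : term) (t : term) : term :=
  match t with
  | Var n => if n <? k then Var n else if n =? k then u else Var (pred n)
  | Lam t1 => Lam (subst (S k) (lift 0 u) t1)
  | App t1 t2 => App (subst k u t1) (subst k u t2)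
  | Sub t1 t2 => Sub (subst (S k) (lift 0 u) t1) (subst k u t2)
  end.

Fixpoint occ (k : nat) (t : term) : nat :=
  match t with
  | Var n => if n =? k then 1 else 0
  | Lam t1 => occ (S k) t1
  | App t1 t2 => occ k t1 + occ k t2
  | Sub t1 t2 => occ (S k) t1 + occ k t2
  end.

Fixpoint swap (d : nat) (t : term) : term :=
  match t with
  | Var n => if n =? d then Var (S d) else if n =? S d then Var d else Var n
  | Lam t1 => Lam (swap (S d) t1)
  | App t1 t2 => App (swap d t1) (swap d t2)
  | Sub t1 t2 => Sub (swap (S d) t1) (swap d t2)
  end.

(* split d t t' : t' is t seen under one extra binder y placed just outside
   the binder of x (x = index d, y = index d+1 in t'), where each free
   occurrence of x is either kept as x or replaced by y. *)
Inductive split : nat -> term -> term -> Prop :=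
| split_lt : forall d n, n < d -> split d (Var n) (Var n)
| split_gt : forall d n, d < n -> split d (Var n) (Var (S n))
| split_keep : forall d, split d (Var d) (Var d)
| split_move : forall d, split d (Var d) (Var (S d))
| split_lam : forall d t t', split (S d) t t' -> split d (Lam t) (Lam t')
| split_app : forall d t t' u u', split d t t' -> split d u u' ->
    split d (App t u) (App t' u')
| split_sub : forall d t t' u u', split (S d) t t' -> split d u u' ->
    split d (Sub t u) (Sub t' u').

(* t L  with L = [x1/u1]...[xk/uk] *)
Definition jumps (t : term) (L : list term) : term :=
  fold_left Sub L t.

Inductive lj_root : term -> term -> Prop :=
| r_dB : forall t L u,
    lj_root (App (jumps (Lam t) L) u) (jumps (Sub t (liftn (length L) u)) L)
| r_w : forall t u, occ 0 t = 0 -> lj_root (Sub t u) (subst 0 u t)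
| r_d : forall t u, occ 0 t = 1 -> lj_root (Sub t u) (subst 0 u t)
| r_c : forall t t' u, 2 <= occ 0 t -> split 0 t t' ->
    1 <= occ 1 t' -> occ 1 t' <= occ 0 t - 1 ->
    lj_root (Sub t u) (Sub (Sub t' (lift 0 u)) u).

Inductive lj_step : term -> term -> Prop :=
| s_root : forall t t', lj_root t t' -> lj_step t t'
| s_lam : forall t t', lj_step t t' -> lj_step (Lam t) (Lam t')
| s_appl : forall t t' u, lj_step t t' -> lj_step (App t u) (App t' u)
| s_appr : forall t u u', lj_step u u' -> lj_step (App t u) (App t u')
| s_subl : forall t t' u, lj_step t t' -> lj_step (Sub t u) (Sub t' u)
| s_subr : forall t u u', lj_step u u' -> lj_step (Sub t u) (Sub t u').

Inductive ctx_equiv (R : term -> term -> Prop) : term -> term -> Prop :=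
| e_base : forall t u, R t u -> ctx_equiv R t u
| e_refl : forall t, ctx_equiv R t t
| e_sym : forall t u, ctx_equiv R t u -> ctx_equiv R u t
| e_trans : forall t u v, ctx_equiv R t u -> ctx_equiv R u v -> ctx_equiv R t v
| e_lam : forall t t', ctx_equiv R t t' -> ctx_equiv R (Lam t) (Lam t')
| e_appl : forall t t' u, ctx_equiv R t t' -> ctx_equiv R (App t u) (App t' u)
| e_appr : forall t u u', ctx_equiv R u u' -> ctx_equiv R (App t u) (App t u')
| e_subl : forall t t' u, ctx_equiv R t t' -> ctx_equiv R (Sub t u) (Sub t' u)
| e_subr : forall t u u', ctx_equiv R u u' -> ctx_equiv R (Sub t u) (Sub t u').

(* t[x/s][y/v] ~ t[y/v][x/s]  (y not free in s; x not free in v is automatic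
   modulo alpha on the left) *)
Inductive cs_ax : term -> term -> Prop :=
| cs_perm : forall t s v,
    cs_ax (Sub (Sub t (lift 0 s)) v) (Sub (Sub (swap 0 t) (lift 0 v)) s).

Inductive o_ax : term -> term -> Prop :=
| o_cs : forall t u, cs_ax t u -> o_ax t u
(* \y.(t[x/s]) ~ (\y.t)[x/s]  if y not free in s *)
| o_lam : forall t s, o_ax (Lam (Sub t (lift 0 s))) (Sub (Lam (swap 0 t)) s)
(* t[x/s] v ~ (t v)[x/s]  if x not free in v *)
| o_app : forall t s v, o_ax (App (Sub t s) v) (Sub (App t (lift 0 v)) s).

Definition equiv_CS := ctx_equiv cs_ax.
Definition equiv_o := ctx_equiv o_ax.

Definition strong_bisimulation (step : term -> term -> Prop)
  (E : term -> term -> Prop) : Prop :=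
  forall s t, E s t ->
    (forall s', step s s' -> exists t', step t t' /\ E s' t') /\
    (forall t', step t t' -> exists s', step s s' /\ E s' t').

From Pilot Require Import Defs.
From Stdlib Require Import Arith List Lia.
Import ListNotations.

(* Terms are de Bruijn terms, so every operation on variables that the
   equations and the rules use -- [lift], [swap], [liftn], and the
   "un-splitting" of a contraction -- is an instance of one parallel
   renaming [ren f]. *)

Definition up (f : nat -> nat) (n : nat) : nat :=
  match n with 0 => 0 | S m => S (f m) end.

Fixpoint ren (f : nat -> nat) (t : term) : term :=
  match t with
  | Var n => Var (f n)
  | Lam a => Lam (ren (up f) a)
  | App a b => App (ren f a) (ren f b)
  | Sub a b => Sub (ren (up f) a) (ren f b)
  end.

Fixpoint upn (k : nat) (f : nat -> nat) : nat -> nat :=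
  match k with 0 => f | S k => up (upn k f) end.

Ltac nat_cases := repeat match goal with
  | |- context [?a <? ?b] => destruct (Nat.ltb_spec a b)
  | |- context [?a =? ?b] => destruct (Nat.eqb_spec a b)
  | |- context [?a <=? ?b] => destruct (Nat.leb_spec a b)
  | H : context [?a <? ?b] |- _ => destruct (Nat.ltb_spec a b)
  | H : context [?a =? ?b] |- _ => destruct (Nat.eqb_spec a b)
  | H : context [?a <=? ?b] |- _ => destruct (Nat.leb_spec a b)
  end.

Lemma ren_ext : forall t f g, (forall n, f n = g n) -> ren f t = ren g t.
Proof.
  induction t; intros f g H; simpl; f_equal; auto;
  try (apply IHt || apply IHt1); intros [|n]; simpl; f_equal; auto.
Qed.

Lemma ren_ext_occ : forall t f g,
  (forall n, 0 < occ n t -> f n = g n) -> ren f t = ren g t.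
Proof.
  induction t; intros f g H; simpl in *.
  - f_equal. apply H. rewrite Nat.eqb_refl. lia.
  - f_equal. apply IHt. intros [|m] Hm; simpl; auto.
  - f_equal; [apply IHt1|apply IHt2]; intros m Hm; apply H; lia.
  - f_equal; [apply IHt1|apply IHt2].
    + intros [|m] Hm; simpl; auto. f_equal. apply H. lia.
    + intros m Hm; apply H; lia.
Qed.

Lemma ren_comp : forall t f g, ren f (ren g t) = ren (fun n => f (g n)) t.
Proof.
  induction t; intros f g; simpl; f_equal; auto;
  try (rewrite IHt || rewrite IHt1); apply ren_ext; intros [|n]; reflexivity.
Qed.

Lemma ren_id : forall t, ren (fun n => n) t = t.
Proof.
  induction t; simpl; f_equal; auto;
  try (rewrite <- IHt at 2 || rewrite <- IHt1 at 2);
  apply ren_ext; intros [|n]; reflexivity.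
Qed.

Lemma upn_spec : forall k f n, upn k f n = if n <? k then n else k + f (n - k).
Proof.
  induction k; intros f n; simpl. { rewrite Nat.sub_0_r; reflexivity. }
  destruct n; simpl; auto. rewrite IHk. unfold Nat.ltb. simpl.
  destruct k; simpl; auto. destruct (n <=? k); auto.
Qed.

Definition liftv (c n : nat) : nat := if c <=? n then S n else n.

Lemma lift_ren : forall t c, lift c t = ren (liftv c) t.
Proof.
  induction t; intros c; simpl; unfold liftv in *.
  - destruct (c <=? n); reflexivity.
  - rewrite IHt. f_equal. apply ren_ext. intros [|m]; simpl; auto.
    destruct (c <=? m); auto.
  - rewrite IHt1, IHt2; reflexivity.
  - rewrite IHt1, IHt2. f_equal. apply ren_ext. intros [|m]; simpl; auto.
    destruct (c <=? m); auto.
Qed.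

Lemma lift0_ren : forall t, lift 0 t = ren S t.
Proof. intros; rewrite lift_ren; apply ren_ext; reflexivity. Qed.

Definition swapv (d n : nat) : nat :=
  if n =? d then S d else if n =? S d then d else n.

Lemma swap_ren : forall t d, swap d t = ren (swapv d) t.
Proof.
  induction t; intros d; simpl; unfold swapv in *.
  - destruct (n =? d); [|destruct (n =? S d)]; reflexivity.
  - rewrite IHt. f_equal. apply ren_ext. intros [|m]; simpl; auto.
    destruct (m =? d); auto; destruct (m =? S d); auto.
  - rewrite IHt1, IHt2; reflexivity.
  - rewrite IHt1, IHt2. f_equal. apply ren_ext. intros [|m]; simpl; auto.
    destruct (m =? d); auto; destruct (m =? S d); auto.
Qed.

Lemma swapv_inj : forall d m m', swapv d m = swapv d m' -> m = m'.
Proof. intros d m m' H. unfold swapv in H. nat_cases; lia. Qed.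

Lemma swap_inv : forall t d, swap d (swap d t) = t.
Proof.
  intros. rewrite !swap_ren, ren_comp. rewrite <- (ren_id t) at 2.
  apply ren_ext. intros n. unfold swapv. nat_cases; lia.
Qed.

Lemma liftn_ren : forall k u, liftn k u = ren (fun n => k + n) u.
Proof.
  induction k; intros u; simpl. { symmetry; apply ren_id. }
  rewrite IHk, lift0_ren, ren_comp. reflexivity.
Qed.

Lemma liftn_S : forall n v, liftn n (lift 0 v) = liftn (S n) v.
Proof. induction n; intros; simpl; auto. rewrite IHn. reflexivity. Qed.

Lemma ren_lift0 : forall u f, ren (up f) (lift 0 u) = lift 0 (ren f u).
Proof. intros. rewrite !lift0_ren, !ren_comp. apply ren_ext; reflexivity. Qed.

Lemma ren_liftn : forall n f u, ren (upn n f) (liftn n u) = liftn n (ren f u).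
Proof.
  intros. rewrite !liftn_ren, !ren_comp. apply ren_ext. intros m.
  rewrite upn_spec. nat_cases; try lia. f_equal. f_equal. lia.
Qed.

Lemma ren_swap0 : forall t f, ren (up (up f)) (swap 0 t) = swap 0 (ren (up (up f)) t).
Proof. intros. rewrite !swap_ren, !ren_comp. apply ren_ext. intros [|[|n]]; reflexivity. Qed.

Lemma swap0_lift2 : forall v, swap 0 (lift 0 (lift 0 v)) = lift 0 (lift 0 v).
Proof. intros. rewrite swap_ren, !lift0_ren, !ren_comp. apply ren_ext. reflexivity. Qed.

(* [merge d] identifies the indices [d] and [d+1]: it undoes a split. *)
Definition merge (d n : nat) : nat := if n <=? d then n else pred n.

Lemma up_merge : forall d n, up (merge d) n = merge (S d) n.
Proof. intros d [|n]; unfold merge; simpl; auto. nat_cases; lia. Qed.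

Lemma split_iff : forall d t t', Defs.split d t t' <-> ren (merge d) t' = t.
Proof.
  split.
  - induction 1; simpl; unfold merge; try (f_equal; auto).
    + f_equal. nat_cases; lia.
    + f_equal. nat_cases; lia.
    + rewrite Nat.leb_refl; auto.
    + nat_cases; lia.
    + rewrite <- IHsplit. apply ren_ext. apply up_merge.
    + rewrite <- IHsplit1. apply ren_ext. apply up_merge.
  - revert d t. induction t'; intros d t H; simpl in H; subst.
    + unfold merge. destruct (lt_eq_lt_dec n d) as [[H|H]|H].
      * rewrite (proj2 (Nat.leb_le n d)) by lia. apply split_lt; auto.
      * subst. rewrite Nat.leb_refl. apply split_keep.
      * rewrite (proj2 (Nat.leb_gt n d)) by lia.
        destruct (Nat.eq_dec n (S d)). { subst. simpl. apply split_move. }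
        destruct n; [lia|]. simpl. apply split_gt. lia.
    + constructor. apply IHt'. apply ren_ext. intros; symmetry; apply up_merge.
    + constructor; auto.
    + constructor; auto. apply IHt'1. apply ren_ext. intros; symmetry; apply up_merge.
Qed.

Lemma merge_lift2 : forall v, ren (merge 0) (lift 0 (lift 0 v)) = lift 0 v.
Proof. intros. rewrite !lift0_ren, !ren_comp. apply ren_ext. reflexivity. Qed.

Lemma merge_swap10 : forall t,
  ren (merge 0) (swap 1 (swap 0 t)) = swap 0 (ren (up (merge 0)) t).
Proof. intros. rewrite !swap_ren, !ren_comp. apply ren_ext. intros [|[|[|n]]]; reflexivity. Qed.

Lemma merge_swap01 : forall t,
  ren (up (merge 0)) (swap 0 (swap 1 t)) = swap 0 (ren (merge 0) t).
Proof. intros. rewrite !swap_ren, !ren_comp. apply ren_ext. intros [|[|[|n]]]; reflexivity. Qed.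

Lemma occ_ren_ge : forall t f n, occ n t <= occ (f n) (ren f t).
Proof.
  induction t; intros f m; simpl.
  - destruct (Nat.eqb_spec n m); subst; [rewrite Nat.eqb_refl|]; lia.
  - apply (IHt (up f) (S m)).
  - specialize (IHt1 f m); specialize (IHt2 f m); lia.
  - specialize (IHt1 (up f) (S m)); specialize (IHt2 f m); simpl in *; lia.
Qed.

Lemma occ_ren_inj : forall t f n, (forall m, f m = f n -> m = n) ->
  occ (f n) (ren f t) = occ n t.
Proof.
  assert (Hup : forall f n, (forall m, f m = f n -> m = n) ->
            forall m, up f m = up f (S n) -> m = S n).
  { intros f n Hf [|k] H; simpl in H; try discriminate.
    injection H; intros; f_equal; auto. }
  induction t; intros f m Hf; simpl.
  - destruct (Nat.eqb_spec (f n) (f m)), (Nat.eqb_spec n m); subst; auto.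
    + apply Hf in e; contradiction.
    + exfalso; auto.
  - apply (IHt (up f) (S m)). exact (Hup f m Hf).
  - rewrite IHt1, IHt2; auto.
  - change (S (f m)) with (up f (S m)). rewrite IHt1, IHt2; auto. exact (Hup f m Hf).
Qed.

Lemma occ_ren_inj_at : forall t f n k, (forall m m', f m = f m' -> m = m') ->
  f n = k -> occ k (ren f t) = occ n t.
Proof. intros; subst; apply occ_ren_inj; auto. Qed.

Lemma occ_ren_out : forall t f k, (forall m, f m <> k) -> occ k (ren f t) = 0.
Proof.
  induction t; intros f k Hf; simpl.
  - destruct (Nat.eqb_spec (f n) k); auto. exfalso; eapply Hf; eauto.
  - apply IHt. intros [|m]; simpl; auto.
  - rewrite IHt1, IHt2; auto.
  - rewrite IHt1, IHt2; auto. intros [|m]; simpl; auto.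
Qed.

Lemma occ_ren_fix : forall t f k, (forall m, f m = k <-> m = k) ->
  occ k (ren f t) = occ k t.
Proof.
  intros t f k Hf. replace k with (f k) at 1 by (apply Hf; reflexivity).
  apply occ_ren_inj. intros m Hm. apply Hf. rewrite Hm. apply Hf. reflexivity.
Qed.

Lemma occ0_up : forall t f, occ 0 (ren (up f) t) = occ 0 t.
Proof. intros; apply occ_ren_fix. intros [|m]; simpl; split; intro; congruence. Qed.

Lemma occ1_upup : forall t f, occ 1 (ren (up (up f)) t) = occ 1 t.
Proof. intros; apply occ_ren_fix. intros [|[|m]]; simpl; split; intro; congruence. Qed.

Lemma occ_lift0_0 : forall s, occ 0 (lift 0 s) = 0.
Proof. intros. rewrite lift0_ren. apply occ_ren_out. intros; discriminate. Qed.

Lemma occ_lift0_S : forall s n, occ (S n) (lift 0 s) = occ n s.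
Proof. intros. rewrite lift0_ren. apply occ_ren_inj_at with (f := S); auto. Qed.

Lemma occ_lift2_1 : forall v, occ 1 (lift 0 (lift 0 v)) = 0.
Proof. intros. rewrite !lift0_ren, ren_comp. apply occ_ren_out. intros; discriminate. Qed.

Lemma occ_swap0 : forall t n, occ (swapv 0 n) (swap 0 t) = occ n t.
Proof. intros. rewrite swap_ren. apply occ_ren_inj. intros m H; eapply swapv_inj; eauto. Qed.

Lemma occ_swap0_0 : forall t, occ 0 (swap 0 t) = occ 1 t.
Proof. intros. apply (occ_swap0 t 1). Qed.

Lemma occ_swap0_1 : forall t, occ 1 (swap 0 t) = occ 0 t.
Proof. intros. apply (occ_swap0 t 0). Qed.

Lemma occ_swap0_SS : forall t n, occ (S (S n)) (swap 0 t) = occ (S (S n)) t.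
Proof. intros. apply (occ_swap0 t (S (S n))). Qed.

Lemma occ_swap10 : forall t, occ 1 (swap 1 (swap 0 t)) = occ 2 t.
Proof.
  intros. rewrite !swap_ren, ren_comp. apply (occ_ren_inj_at t _ 2 1); auto.
  intros m m' H. apply swapv_inj in H. apply swapv_inj in H. auto.
Qed.

Lemma occ_swap01 : forall t, occ 2 (swap 0 (swap 1 t)) = occ 1 t.
Proof.
  intros. rewrite !swap_ren, ren_comp. apply (occ_ren_inj_at t _ 1 2); auto.
  intros m m' H. apply swapv_inj in H. apply swapv_inj in H. auto.
Qed.

(* The side condition says that
   [g] renames the substituted index [k] to [k'] and, away from it, agrees
   with [f] once both sides have closed the gap left by the substitution. *)

Definition subst_compatible (f g : nat -> nat) (k k' : nat) : Prop :=
  forall n, n <> k -> g n <> k' /\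
    (if g n <? k' then g n else pred (g n)) = f (if n <? k then n else pred n).

Lemma subst_compatible_up : forall f g k k',
  subst_compatible f g k k' -> subst_compatible (up f) (up g) (S k) (S k').
Proof.
  intros f g k k' Hn [|n] H; simpl.
  - split; auto.
  - assert (n <> k) as Hnk by congruence. destruct (Hn n Hnk) as [H1 H2]. split. { congruence. }
    revert H2. nat_cases; simpl; intro HH; try lia.
    all: try (rewrite HH; reflexivity).
    all: destruct n; simpl in *; try lia; rewrite <- HH; destruct (g (S n)); simpl; lia.
Qed.

Lemma subst_ren : forall t f g k k' u, g k = k' -> subst_compatible f g k k' ->
  ren f (subst k u t) = subst k' (ren f u) (ren g t).
Proof.
  induction t; intros f g k k' u Hk Hn; simpl.
  - destruct (Nat.eqb_spec n k) as [->|Hnk].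
    + rewrite Hk. simpl. nat_cases; try lia. reflexivity.
    + destruct (Hn n Hnk) as [H1 H2]. revert H2.
      simpl. nat_cases; simpl; intro HH; try lia; congruence.
  - f_equal. rewrite IHt with (g := up g) (k' := S k').
    + rewrite ren_lift0; reflexivity.
    + simpl; congruence.
    + apply subst_compatible_up; auto.
  - rewrite (IHt1 f g k k'), (IHt2 f g k k'); auto.
  - f_equal.
    + rewrite IHt1 with (g := up g) (k' := S k').
      * rewrite ren_lift0; reflexivity.
      * simpl; congruence.
      * apply subst_compatible_up; auto.
    + apply IHt2; auto.
Qed.

Lemma ren_subst0 : forall t f u, ren f (subst 0 u t) = subst 0 (ren f u) (ren (up f) t).
Proof.
  intros. apply subst_ren; auto. intros [|n] H; simpl; [lia|]. split; auto.
Qed.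

Lemma subst_lift0_comm : forall s k w,
  subst (S k) (lift 0 w) (lift 0 s) = lift 0 (subst k w s).
Proof.
  intros. rewrite (lift0_ren (subst k w s)).
  rewrite (subst_ren s S S k (S k) w); auto.
  - rewrite <- !lift0_ren. reflexivity.
  - intros n Hn. split; [lia|]. nat_cases; simpl; try lia; auto.
Qed.

Lemma subst_swap0_comm : forall t k W, swap 0 W = W ->
  subst (S (S k)) W (swap 0 t) = swap 0 (subst (S (S k)) W t).
Proof.
  intros t k W HW. rewrite !swap_ren.
  rewrite (subst_ren t (swapv 0) (swapv 0) (S (S k)) (S (S k)) W).
  - rewrite <- (swap_ren W), HW. reflexivity.
  - reflexivity.
  - intros n Hn. unfold swapv. split; nat_cases; simpl; try lia; nat_cases; try lia; auto.
Qed.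

(* Substituting for an index that does not occur just closes the gap. *)
Lemma subst_cancel : forall t f h k u, (forall n, f n <> k) ->
  (forall n, h n = if f n <? k then f n else pred (f n)) ->
  subst k u (ren f t) = ren h t.
Proof.
  induction t; intros f h k u Hf Hh; simpl.
  - rewrite Hh. specialize (Hf n). nat_cases; try lia; reflexivity.
  - f_equal. apply IHt. { intros [|n]; simpl; auto. }
    intros [|n]; simpl; auto. rewrite Hh. specialize (Hf n). nat_cases; try lia; auto.
    all: destruct (f n); simpl; lia.
  - f_equal; auto.
  - f_equal; auto. apply IHt1. { intros [|n]; simpl; auto. }
    intros [|n]; simpl; auto. rewrite Hh. specialize (Hf n). nat_cases; try lia; auto.
    all: destruct (f n); simpl; lia.
Qed.

Lemma subst_lift0 : forall s u, subst 0 u (lift 0 s) = s.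
Proof.
  intros. rewrite lift0_ren, (subst_cancel s S (fun n => n)); auto. apply ren_id.
Qed.

Lemma subst_swap : forall t k u, subst k u (swap k t) = subst (S k) u t.
Proof.
  induction t; intros k u; simpl.
  - cbn -[Nat.eqb Nat.ltb Nat.leb]; nat_cases; cbn -[Nat.eqb Nat.ltb Nat.leb];
      nat_cases; try lia; try reflexivity; f_equal; lia.
  - rewrite IHt; auto.
  - rewrite IHt1, IHt2; auto.
  - rewrite IHt1, IHt2; auto.
Qed.

Lemma subst_swap0_back : forall t u, subst 1 u (swap 0 t) = subst 0 u t.
Proof. intros. rewrite <- subst_swap, swap_inv. reflexivity. Qed.

(* Lists of jumps.  [renL f L] renames a list of jump arguments, each
   under the binders of the jumps that follow it. *)

Fixpoint renL (f : nat -> nat) (L : list term) : list term :=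
  match L with [] => [] | x :: L => ren (upn (length L) f) x :: renL f L end.

Lemma length_renL : forall L f, length (renL f L) = length L.
Proof. induction L; simpl; auto. Qed.

Lemma jumps_app1 : forall t L x, jumps t (L ++ [x]) = Sub (jumps t L) x.
Proof. intros. unfold jumps. rewrite fold_left_app. reflexivity. Qed.

Lemma ren_jumps : forall L t f,
  ren f (jumps t L) = jumps (ren (upn (length L) f) t) (renL f L).
Proof. induction L; intros t f; simpl; auto. Qed.

Lemma jumps_Lam_inv : forall L a b, jumps (Lam a) L = Lam b -> L = [] /\ a = b.
Proof.
  intros L; induction L using rev_ind; intros a b H.
  - simpl in H. injection H; auto.
  - rewrite jumps_app1 in H; discriminate.
Qed.

Lemma jumps_Sub_inv : forall L a p q, jumps (Lam a) L = Sub p q ->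
  exists L0, L = L0 ++ [q] /\ p = jumps (Lam a) L0.
Proof.
  intros L; induction L using rev_ind; intros a p q H.
  - simpl in H; discriminate.
  - rewrite jumps_app1 in H. injection H; intros; subst; eauto.
Qed.

Lemma jumps_App_inv : forall L a p q, jumps (Lam a) L <> App p q.
Proof.
  intros L; induction L using rev_ind; intros a p q H.
  - simpl in H; discriminate.
  - rewrite jumps_app1 in H. discriminate.
Qed.

Lemma ren_inv_Lam : forall t f a, ren f t = Lam a ->
  exists t1, t = Lam t1 /\ a = ren (up f) t1.
Proof. intros [] f a H; simpl in H; try discriminate. injection H; intros; subst; eauto. Qed.

Lemma ren_inv_App : forall t f a b, ren f t = App a b ->
  exists a0 b0, t = App a0 b0 /\ a = ren f a0 /\ b = ren f b0.
Proof. intros [] f a b H; simpl in H; try discriminate. injection H; intros; subst; eauto. Qed.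

Lemma ren_inv_Sub : forall t f a b, ren f t = Sub a b ->
  exists a0 b0, t = Sub a0 b0 /\ a = ren (up f) a0 /\ b = ren f b0.
Proof. intros [] f a b H; simpl in H; try discriminate. injection H; intros; subst; eauto. Qed.

Lemma ren_inv_jumps_Lam : forall L t f a, ren f t = jumps (Lam a) L ->
  exists a0 L0, t = jumps (Lam a0) L0 /\ a = ren (upn (S (length L0)) f) a0 /\
                L = renL f L0.
Proof.
  assert (Hj : forall L t f c, ren f t = jumps c L ->
    exists c0 L0, t = jumps c0 L0 /\ c = ren (upn (length L) f) c0 /\ L = renL f L0).
  { induction L; intros t f c H.
    - exists t, []. simpl in *. auto.
    - simpl in H. destruct (IHL t f _ H) as [c1 [L0 [H1 [H2 H3]]]].
      symmetry in H2. destruct (ren_inv_Sub _ _ _ _ H2) as [c0 [x0 [-> [-> ->]]]].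
      exists c0, (x0 :: L0). subst t L. simpl. rewrite !length_renL. split; auto. }
  intros L t f a H. destruct (Hj L t f _ H) as [c0 [L0 [H1 [H2 H3]]]].
  symmetry in H2. destruct (ren_inv_Lam _ _ _ H2) as [a0 [-> ->]].
  exists a0, L0. subst. rewrite length_renL. auto.
Qed.

Lemma lift_reflect : forall b0 f s, ren (up f) b0 = lift 0 s ->
  exists s0, b0 = lift 0 s0 /\ s = ren f s0.
Proof.
  intros b0 f s H.
  assert (H0 : occ 0 b0 = 0).
  { pose proof (occ_ren_ge b0 (up f) 0) as Hge. simpl in Hge. rewrite H, lift0_ren in Hge.
    rewrite occ_ren_out in Hge; [lia|]. intros; discriminate. }
  exists (ren pred b0). split.
  - rewrite lift0_ren, ren_comp. rewrite <- (ren_id b0) at 1. apply ren_ext_occ.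
    intros [|n] Hn; simpl; lia.
  - assert (Hs : s = ren pred (lift 0 s)).
    { rewrite lift0_ren, ren_comp. rewrite ren_id. reflexivity. }
    rewrite Hs, <- H, !ren_comp. apply ren_ext_occ. intros [|n] Hn; simpl; lia.
Qed.

(* A split of a lifted term is its double lift: neither half occurs in it. *)
Lemma merge_lift_reflect : forall S' s, ren (merge 0) S' = lift 0 s -> S' = lift 0 (lift 0 s).
Proof.
  intros S' s H.
  assert (Hout : forall n, n <= 1 -> occ n S' = 0).
  { intros n Hn. pose proof (occ_ren_ge S' (merge 0) n) as Hge.
    rewrite H, lift0_ren in Hge. rewrite occ_ren_out in Hge; [lia|].
    intros m Hm. unfold merge in Hm. destruct n as [|[|]]; simpl in Hm; lia. }
  rewrite <- H. rewrite !lift0_ren, ren_comp. rewrite <- (ren_id S') at 1. apply ren_ext_occ.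
  intros [|[|n]] Hn; unfold merge; simpl; auto; rewrite Hout in Hn; lia.
Qed.

Lemma merge_reflect : forall a0 d f a', ren (upn (S d) f) a0 = ren (merge d) a' ->
  exists a0', ren (merge d) a0' = a0 /\ ren (upn (S (S d)) f) a0' = a'.
Proof.
  induction a0; intros d f a' H; destruct a'; simpl in H; try discriminate.
  - injection H; clear H; intro H.
    change (up (upn d f) n) with (upn (S d) f n) in H.
    rewrite upn_spec in H. unfold merge in H.
    destruct (Nat.ltb_spec n (S d)).
    + destruct (Nat.eqb_spec n d).
      * exists (Var n0). cbn [ren]. rewrite upn_spec. unfold merge.
        revert H. nat_cases; intros; try lia; split; f_equal; lia.
      * exists (Var n). cbn [ren]. rewrite upn_spec. unfold merge.
        revert H. nat_cases; intros; try lia; split; f_equal; lia.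
    + exists (Var (S n)). cbn [ren]. rewrite upn_spec. unfold merge.
      revert H. nat_cases; intros; try lia; split; f_equal; try lia.
      replace (S n - S (S d)) with (n - S d) by lia. lia.
  - injection H; clear H; intro H.
    rewrite (ren_ext a' (up (merge d)) (merge (S d))) in H by apply up_merge.
    destruct (IHa0 (S d) f a' H) as [x [H1 H2]]. exists (Lam x). simpl.
    rewrite (ren_ext x (up (merge d)) (merge (S d))) by apply up_merge.
    change (up (up (up (upn d f)))) with (upn (S (S (S d))) f).
    rewrite H1, H2. auto.
  - injection H; clear H; intros H1 H2.
    destruct (IHa0_1 d f _ H2) as [x [Hx1 Hx2]]. destruct (IHa0_2 d f _ H1) as [y [Hy1 Hy2]].
    exists (App x y). cbn [ren]. rewrite Hx1, Hx2, Hy1, Hy2. auto.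
  - injection H; clear H; intros H1 H2.
    rewrite (ren_ext a'1 (up (merge d)) (merge (S d))) in H2 by apply up_merge.
    destruct (IHa0_1 (S d) f _ H2) as [x [Hx1 Hx2]]. destruct (IHa0_2 d f _ H1) as [y [Hy1 Hy2]].
    exists (Sub x y). simpl.
    rewrite (ren_ext x (up (merge d)) (merge (S d))) by apply up_merge.
    change (up (up (up (upn d f)))) with (upn (S (S (S d))) f).
    change (up (up (upn d f))) with (upn (S (S d)) f).
    rewrite Hx1, Hx2, Hy1, Hy2. auto.
Qed.

Lemma root_ren : forall t t' f, lj_root t t' -> lj_root (ren f t) (ren f t').
Proof.
  intros t t' f H. destruct H.
  - simpl. rewrite !ren_jumps. simpl. rewrite <- (length_renL L f), ren_liftn.
    apply r_dB.
  - rewrite ren_subst0. simpl. apply r_w. rewrite occ0_up; auto.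
  - rewrite ren_subst0. simpl. apply r_d. rewrite occ0_up; auto.
  - simpl. rewrite ren_lift0. apply r_c with (t' := ren (up (up f)) t').
    + rewrite occ0_up; auto.
    + apply split_iff. apply split_iff in H0. subst t. rewrite !ren_comp.
      apply ren_ext. intros [|[|n]]; reflexivity.
    + rewrite occ1_upup; auto.
    + rewrite occ1_upup, occ0_up; auto.
Qed.

Lemma step_ren : forall t t' f, lj_step t t' -> lj_step (ren f t) (ren f t').
Proof.
  intros t t' f H. revert f. induction H; intros f; simpl.
  - apply s_root, root_ren; auto.
  - apply s_lam; auto.
  - apply s_appl; auto.
  - apply s_appr; auto.
  - apply s_subl; auto.
  - apply s_subr; auto.
Qed.

Lemma step_lift : forall s s', lj_step s s' -> lj_step (lift 0 s) (lift 0 s').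
Proof. intros. rewrite !lift0_ren. apply step_ren; auto. Qed.

Lemma step_swap : forall s s', lj_step s s' -> lj_step (swap 0 s) (swap 0 s').
Proof. intros. rewrite !swap_ren. apply step_ren; auto. Qed.

Lemma root_ren_reflect : forall t f w, lj_root (ren f t) w ->
  exists w0, lj_root t w0 /\ w = ren f w0.
Proof.
  intros t f w H. remember (ren f t) as rt. destruct H; symmetry in Heqrt.
  - destruct (ren_inv_App _ _ _ _ Heqrt) as [p [u0 [-> [Hp ->]]]].
    symmetry in Hp. destruct (ren_inv_jumps_Lam _ _ _ _ Hp) as [a0 [L0 [-> [-> ->]]]].
    exists (jumps (Sub a0 (liftn (length L0) u0)) L0). split; [apply r_dB|].
    rewrite ren_jumps. simpl. rewrite length_renL, ren_liftn. reflexivity.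
  - destruct (ren_inv_Sub _ _ _ _ Heqrt) as [a0 [u0 [-> [-> ->]]]].
    exists (subst 0 u0 a0). split.
    + apply r_w. rewrite occ0_up in H; auto.
    + rewrite ren_subst0. auto.
  - destruct (ren_inv_Sub _ _ _ _ Heqrt) as [a0 [u0 [-> [-> ->]]]].
    exists (subst 0 u0 a0). split.
    + apply r_d. rewrite occ0_up in H; auto.
    + rewrite ren_subst0. auto.
  - destruct (ren_inv_Sub _ _ _ _ Heqrt) as [a0 [u0 [-> [-> ->]]]].
    apply split_iff in H0. symmetry in H0.
    destruct (merge_reflect a0 0 f t' H0) as [x [Hx1 Hx2]]. simpl in Hx2.
    rewrite occ0_up in H. rewrite <- Hx2, occ1_upup in H1, H2. rewrite occ0_up in H2.
    exists (Sub (Sub x (lift 0 u0)) u0). split.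
    + apply r_c; auto. apply split_iff; auto.
    + simpl. rewrite ren_lift0, Hx2. auto.
Qed.

Lemma step_ren_reflect : forall t f w, lj_step (ren f t) w ->
  exists w0, lj_step t w0 /\ w = ren f w0.
Proof.
  intros t f w H. remember (ren f t) as rt. revert t f Heqrt.
  induction H as [t t' Hr|t t' H IH|t t' u H IH|t u u' H IH|t t' u H IH|t u u' H IH];
    intros t0 f Heq; symmetry in Heq.
  - subst. destruct (root_ren_reflect _ _ _ Hr) as [w0 [H1 H2]].
    exists w0; split; auto. apply s_root; auto.
  - destruct (ren_inv_Lam _ _ _ Heq) as [t1 [-> ->]].
    destruct (IH t1 (up f) eq_refl) as [w0 [H1 ->]].
    exists (Lam w0); split; auto. apply s_lam; auto.
  - destruct (ren_inv_App _ _ _ _ Heq) as [a [b [-> [-> ->]]]].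
    destruct (IH a f eq_refl) as [w0 [H1 ->]].
    exists (App w0 b); split; auto. apply s_appl; auto.
  - destruct (ren_inv_App _ _ _ _ Heq) as [a [b [-> [-> ->]]]].
    destruct (IH b f eq_refl) as [w0 [H1 ->]].
    exists (App a w0); split; auto. apply s_appr; auto.
  - destruct (ren_inv_Sub _ _ _ _ Heq) as [a [b [-> [-> ->]]]].
    destruct (IH a (up f) eq_refl) as [w0 [H1 ->]].
    exists (Sub w0 b); split; auto. apply s_subl; auto.
  - destruct (ren_inv_Sub _ _ _ _ Heq) as [a [b [-> [-> ->]]]].
    destruct (IH b f eq_refl) as [w0 [H1 ->]].
    exists (Sub a w0); split; auto. apply s_subr; auto.
Qed.

Lemma step_lift_reflect : forall s w, lj_step (lift 0 s) w ->
  exists s', lj_step s s' /\ w = lift 0 s'.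
Proof.
  intros s w H. rewrite lift0_ren in H. destruct (step_ren_reflect _ _ _ H) as [w0 [H1 ->]].
  exists w0; split; auto. rewrite lift0_ren; auto.
Qed.

Definition sym_clos (R : term -> term -> Prop) (a b : term) : Prop := R a b \/ R b a.

Inductive ctx_step (Q : term -> term -> Prop) : term -> term -> Prop :=
| cx_root : forall a b, Q a b -> ctx_step Q a b
| cx_lam : forall a b, ctx_step Q a b -> ctx_step Q (Lam a) (Lam b)
| cx_appl : forall a b c, ctx_step Q a b -> ctx_step Q (App a c) (App b c)
| cx_appr : forall a b c, ctx_step Q a b -> ctx_step Q (App c a) (App c b)
| cx_subl : forall a b c, ctx_step Q a b -> ctx_step Q (Sub a c) (Sub b c)
| cx_subr : forall a b c, ctx_step Q a b -> ctx_step Q (Sub c a) (Sub c b).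

Inductive eqv_clos (Q : term -> term -> Prop) : term -> term -> Prop :=
| ec_step : forall a b, Q a b -> eqv_clos Q a b
| ec_refl : forall a, eqv_clos Q a a
| ec_sym : forall a b, eqv_clos Q a b -> eqv_clos Q b a
| ec_trans : forall a b c, eqv_clos Q a b -> eqv_clos Q b c -> eqv_clos Q a c.

Definition simulates (R : term -> term -> Prop) (a b : term) : Prop :=
  forall a', lj_step a a' -> exists b', lj_step b b' /\ ctx_equiv R a' b'.

Record admissible (R : term -> term -> Prop) : Prop := {
  adm_ren : forall a b f, R a b -> R (ren f a) (ren f b);
  adm_subst : forall a b k w, R a b -> R (subst k w a) (subst k w b);
  adm_occ : forall a b n, R a b -> occ n a = occ n b;
  adm_reflect_l : forall t f q, R (ren f t) q -> exists q0, R t q0 /\ q = ren f q0;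
  adm_reflect_r : forall t f p, R p (ren f t) -> exists p0, R p0 t /\ p = ren f p0;
  adm_root : forall a b, R a b -> simulates R a b /\ simulates R b a;
  adm_dB : forall a L u, sym_clos R (jumps (Lam a) L) u ->
    exists a' L', u = jumps (Lam a') L' /\
      forall v, ctx_equiv R (jumps (Sub a (liftn (length L) v)) L)
                            (jumps (Sub a' (liftn (length L') v)) L')
}.

Lemma ctx_equiv_clos : forall R a b, ctx_equiv R a b -> eqv_clos (ctx_step (sym_clos R)) a b.
Proof.
  intros R a b H.
  assert (cong : forall F : term -> term,
    (forall x y, ctx_step (sym_clos R) x y -> ctx_step (sym_clos R) (F x) (F y)) ->
    forall x y, eqv_clos (ctx_step (sym_clos R)) x y ->
                eqv_clos (ctx_step (sym_clos R)) (F x) (F y)).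
  { intros F HF x y Hxy. induction Hxy.
    - apply ec_step; auto.
    - apply ec_refl.
    - apply ec_sym; auto.
    - eapply ec_trans; eauto. }
  induction H.
  - apply ec_step, cx_root; left; auto.
  - apply ec_refl.
  - apply ec_sym; auto.
  - eapply ec_trans; eauto.
  - apply (cong Lam); auto. intros; apply cx_lam; auto.
  - apply (cong (fun x => App x u)); auto. intros; apply cx_appl; auto.
  - apply (cong (fun x => App t x)); auto. intros; apply cx_appr; auto.
  - apply (cong (fun x => Sub x u)); auto. intros; apply cx_subl; auto.
  - apply (cong (fun x => Sub t x)); auto. intros; apply cx_subr; auto.
Qed.

Section Criterion.

Variable R : term -> term -> Prop.
Hypothesis HR : admissible R.

Local Notation rstep := (ctx_step (sym_clos R)).

Lemma ctx_step_sym : forall a b, rstep a b -> rstep b a.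
Proof.
  induction 1.
  - apply cx_root. destruct H; [right|left]; auto.
  - apply cx_lam; auto.
  - apply cx_appl; auto.
  - apply cx_appr; auto.
  - apply cx_subl; auto.
  - apply cx_subr; auto.
Qed.

Lemma ctx_step_equiv : forall a b, rstep a b -> ctx_equiv R a b.
Proof.
  induction 1.
  - destruct H; [apply e_base|apply e_sym, e_base]; auto.
  - apply e_lam; auto.
  - apply e_appl; auto.
  - apply e_appr; auto.
  - apply e_subl; auto.
  - apply e_subr; auto.
Qed.

Lemma ctx_step_ren : forall a b f, rstep a b -> rstep (ren f a) (ren f b).
Proof.
  intros a b f H. revert f. induction H; intros f; simpl.
  - apply cx_root. destruct H; [left|right]; apply HR; auto.
  - apply cx_lam; auto.
  - apply cx_appl; auto.
  - apply cx_appr; auto.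
  - apply cx_subl; auto.
  - apply cx_subr; auto.
Qed.

Lemma ctx_step_subst : forall a b k w, rstep a b -> rstep (subst k w a) (subst k w b).
Proof.
  intros a b k w H. revert k w. induction H; intros k w; simpl.
  - apply cx_root. destruct H; [left|right]; apply HR; auto.
  - apply cx_lam; auto.
  - apply cx_appl; auto.
  - apply cx_appr; auto.
  - apply cx_subl; auto.
  - apply cx_subr; auto.
Qed.

Lemma ctx_step_occ : forall a b n, rstep a b -> occ n a = occ n b.
Proof.
  intros a b n H. revert n. induction H; intros n; simpl; auto.
  destruct H; [|symmetry]; eapply adm_occ; eauto.
Qed.

Lemma ctx_step_ren_reflect : forall t f u, rstep (ren f t) u ->
  exists u0, rstep t u0 /\ u = ren f u0.
Proof.
  intros t f u H. remember (ren f t) as rt. revert t f Heqrt.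
  induction H as [a b Hr|a b H IH|a b c H IH|a b c H IH|a b c H IH|a b c H IH];
    intros t0 f Heq; symmetry in Heq.
  - subst. destruct Hr as [Hr|Hr].
    + destruct (adm_reflect_l R HR _ _ _ Hr) as [q [H1 H2]].
      exists q; split; auto. apply cx_root; left; auto.
    + destruct (adm_reflect_r R HR _ _ _ Hr) as [q [H1 H2]].
      exists q; split; auto. apply cx_root; right; auto.
  - destruct (ren_inv_Lam _ _ _ Heq) as [t1 [-> ->]].
    destruct (IH t1 (up f) eq_refl) as [w0 [H1 ->]].
    exists (Lam w0); split; auto. apply cx_lam; auto.
  - destruct (ren_inv_App _ _ _ _ Heq) as [x [y [-> [-> ->]]]].
    destruct (IH x f eq_refl) as [w0 [H1 ->]].
    exists (App w0 y); split; auto. apply cx_appl; auto.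
  - destruct (ren_inv_App _ _ _ _ Heq) as [x [y [-> [-> ->]]]].
    destruct (IH y f eq_refl) as [w0 [H1 ->]].
    exists (App x w0); split; auto. apply cx_appr; auto.
  - destruct (ren_inv_Sub _ _ _ _ Heq) as [x [y [-> [-> ->]]]].
    destruct (IH x (up f) eq_refl) as [w0 [H1 ->]].
    exists (Sub w0 y); split; auto. apply cx_subl; auto.
  - destruct (ren_inv_Sub _ _ _ _ Heq) as [x [y [-> [-> ->]]]].
    destruct (IH y f eq_refl) as [w0 [H1 ->]].
    exists (Sub x w0); split; auto. apply cx_subr; auto.
Qed.

Lemma ctx_equiv_lift : forall a b, ctx_equiv R a b -> ctx_equiv R (lift 0 a) (lift 0 b).
Proof.
  intros a b H. rewrite !lift0_ren. generalize S as f. induction H; intros f; simpl.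
  - apply e_base, HR; auto.
  - apply e_refl.
  - apply e_sym; auto.
  - eapply e_trans; eauto.
  - apply e_lam; auto.
  - apply e_appl; auto.
  - apply e_appr; auto.
  - apply e_subl; auto.
  - apply e_subr; auto.
Qed.

Lemma ctx_equiv_subst_arg : forall v a b k, ctx_equiv R a b ->
  ctx_equiv R (subst k a v) (subst k b v).
Proof.
  induction v; intros a b k H; simpl.
  - nat_cases; auto; apply e_refl.
  - apply e_lam, IHv, ctx_equiv_lift; auto.
  - eapply e_trans; [apply e_appl, IHv1; eauto | apply e_appr, IHv2; auto].
  - eapply e_trans; [apply e_subl, IHv1, ctx_equiv_lift; eauto | apply e_subr, IHv2; auto].
Qed.

Lemma ctx_equiv_jumps : forall L a b, ctx_equiv R a b -> ctx_equiv R (jumps a L) (jumps b L).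
Proof. induction L; intros a0 b H; simpl; auto. apply IHL, e_subl; auto. Qed.

Lemma ctx_step_dB : forall L a u, rstep (jumps (Lam a) L) u ->
  exists a' L', u = jumps (Lam a') L' /\
    forall v, ctx_equiv R (jumps (Sub a (liftn (length L) v)) L)
                          (jumps (Sub a' (liftn (length L') v)) L').
Proof.
  intros L. induction L using rev_ind; intros a u H.
  - simpl in H. inversion H; subst.
    + apply (adm_dB R HR a [] u); auto.
    + exists b, []. split; auto. intros v. simpl. apply e_subl, ctx_step_equiv; auto.
  - rewrite jumps_app1 in H. inversion H; subst.
    + rewrite <- jumps_app1 in H0. apply (adm_dB R HR); auto.
    + destruct (IHL a b H3) as [a' [L' [-> Hc]]].
      exists a', (L' ++ [x]). split; [rewrite jumps_app1; auto|].
      intros v. rewrite !jumps_app1, !length_app. simpl. rewrite !Nat.add_1_r, <- !liftn_S.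
      apply e_subl, Hc.
    + exists a, (L ++ [b]). split; [rewrite jumps_app1; auto|].
      intros v. rewrite !jumps_app1, !length_app. simpl. apply e_subr, ctx_step_equiv; auto.
Qed.

(* The root
   redex of the enclosing term is either untouched by the rewrite (it
   fires identically on the other side) or is a dB-redex handled by
   [ctx_step_dB], or is a [w]/[d]/[c]-redex whose side conditions only
   depend on occurrence counts, preserved by [ctx_step_occ]. *)

Lemma simulates_lam : forall a b, simulates R a b -> simulates R (Lam a) (Lam b).
Proof.
  intros a b IH w Hs. inversion Hs; subst.
  - match goal with Hx : lj_root (Lam _) _ |- _ => inversion Hx end.
  - destruct (IH t' H0) as [b' [H1 H2]]. exists (Lam b'). split.
    + apply s_lam; auto.
    + apply e_lam; auto.
Qed.

Lemma simulates_appl : forall a b c, rstep a b -> simulates R a b ->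
  simulates R (App a c) (App b c).
Proof.
  intros a b c Hc IH w Hs. inversion Hs; subst.
  - inversion H; subst.
    destruct (ctx_step_dB _ _ _ Hc) as [a' [L' [-> Hj]]].
    eexists; split; [apply s_root, r_dB | apply Hj].
  - destruct (IH t' H2) as [b' [H1 H3]]. exists (App b' c). split.
    + apply s_appl; auto.
    + apply e_appl; auto.
  - exists (App b u'). split.
    + apply s_appr; auto.
    + apply e_appl, ctx_step_equiv; auto.
Qed.

Lemma simulates_appr : forall a b c, rstep a b -> simulates R a b ->
  simulates R (App c a) (App c b).
Proof.
  intros a b c Hc IH w Hs. inversion Hs; subst.
  - inversion H; subst.
    eexists; split; [apply s_root, r_dB|].
    apply ctx_equiv_jumps, e_subr, ctx_step_equiv. rewrite !liftn_ren. apply ctx_step_ren; auto.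
  - exists (App t' b). split.
    + apply s_appl; auto.
    + apply e_appr, ctx_step_equiv; auto.
  - destruct (IH u' H2) as [b' [H1 H3]]. exists (App c b'). split.
    + apply s_appr; auto.
    + apply e_appr; auto.
Qed.

Lemma simulates_subl : forall a b c, rstep a b -> simulates R a b ->
  simulates R (Sub a c) (Sub b c).
Proof.
  intros a b c Hc IH w Hs.
  pose proof (ctx_step_occ _ _ 0 Hc) as Hocc.
  inversion Hs; subst.
  - inversion H; subst.
    + exists (subst 0 c b). split; [apply s_root, r_w; lia|].
      apply ctx_step_equiv, ctx_step_subst; auto.
    + exists (subst 0 c b). split; [apply s_root, r_d; lia|].
      apply ctx_step_equiv, ctx_step_subst; auto.
    + (* the rewrite inside [a] is transported to the split of [a] *)
      apply split_iff in H3. subst a.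
      destruct (ctx_step_ren_reflect _ _ _ Hc) as [u0 [Hu ->]].
      pose proof (ctx_step_occ _ _ 1 Hu) as Hocc1.
      exists (Sub (Sub u0 (lift 0 c)) c). split.
      * apply s_root, r_c; try lia. apply split_iff; auto.
      * apply e_subl, e_subl, ctx_step_equiv; auto.
  - destruct (IH t' H2) as [b' [H1 H3]]. exists (Sub b' c). split.
    + apply s_subl; auto.
    + apply e_subl; auto.
  - exists (Sub b u'). split.
    + apply s_subr; auto.
    + apply e_subl, ctx_step_equiv; auto.
Qed.

Lemma simulates_subr : forall a b c, rstep a b -> simulates R a b ->
  simulates R (Sub c a) (Sub c b).
Proof.
  intros a b c Hc IH w Hs. inversion Hs; subst.
  - inversion H; subst.
    + exists (subst 0 b c). split; [apply s_root, r_w; auto|].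
      apply ctx_equiv_subst_arg, ctx_step_equiv; auto.
    + exists (subst 0 b c). split; [apply s_root, r_d; auto|].
      apply ctx_equiv_subst_arg, ctx_step_equiv; auto.
    + exists (Sub (Sub t' (lift 0 b)) b). split; [apply s_root, r_c; auto|].
      eapply e_trans; [apply e_subl, e_subr, ctx_equiv_lift, ctx_step_equiv; eauto|].
      apply e_subr, ctx_step_equiv; auto.
  - exists (Sub t' b). split.
    + apply s_subl; auto.
    + apply e_subr, ctx_step_equiv; auto.
  - destruct (IH u' H2) as [b' [H1 H3]]. exists (Sub c b'). split.
    + apply s_subr; auto.
    + apply e_subr; auto.
Qed.

Lemma ctx_step_simulates : forall t u, rstep t u -> simulates R t u.
Proof.
  induction 1 as [a b Hr|a b Hc IH|a b c Hc IH|a b c Hc IH|a b c Hc IH|a b c Hc IH].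
  - destruct Hr as [Hr|Hr]; apply (adm_root R HR _ _ Hr).
  - apply simulates_lam; auto.
  - apply simulates_appl; auto.
  - apply simulates_appr; auto.
  - apply simulates_subl; auto.
  - apply simulates_subr; auto.
Qed.

Theorem admissible_bisim : strong_bisimulation lj_step (ctx_equiv R).
Proof.
  intros s t H. apply ctx_equiv_clos in H.
  cut (simulates R s t /\ simulates R t s).
  { intros [H1 H2]. split; auto.
    intros t' Ht. destruct (H2 t' Ht) as [s' [Hs Hr]]. exists s'. split; auto. apply e_sym; auto. }
  induction H.
  - split; apply ctx_step_simulates; auto. apply ctx_step_sym; auto.
  - split; intros a' Ha; exists a'; split; auto; apply e_refl.
  - tauto.
  - destruct IHeqv_clos1 as [H1 H2], IHeqv_clos2 as [H3 H4]. split.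
    + intros x Hx. destruct (H1 x Hx) as [y [Hy Rxy]]. destruct (H3 y Hy) as [z [Hz Ryz]].
      exists z; split; auto. eapply e_trans; eauto.
    + intros x Hx. destruct (H4 x Hx) as [y [Hy Rxy]]. destruct (H2 y Hy) as [z [Hz Ryz]].
      exists z; split; auto. eapply e_trans; eauto.
Qed.

End Criterion.

Lemma cs_ax_sym : forall a b, cs_ax a b -> cs_ax b a.
Proof.
  intros a b []. pose proof (cs_perm (swap 0 t) v s) as H. rewrite swap_inv in H. auto.
Qed.

Lemma cs_ax_ren : forall a b f, cs_ax a b -> cs_ax (ren f a) (ren f b).
Proof. intros a b f []. simpl. rewrite !ren_lift0, ren_swap0. apply cs_perm. Qed.

Lemma cs_ax_subst : forall a b k w, cs_ax a b -> cs_ax (subst k w a) (subst k w b).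
Proof.
  intros a b k w []. simpl.
  rewrite !subst_lift0_comm, subst_swap0_comm by apply swap0_lift2. apply cs_perm.
Qed.

Lemma cs_ax_occ : forall a b n, cs_ax a b -> occ n a = occ n b.
Proof. intros a b n []. simpl. rewrite !occ_lift0_S, occ_swap0_SS. lia. Qed.

Lemma cs_ax_reflect_l : forall t f q, cs_ax (ren f t) q ->
  exists q0, cs_ax t q0 /\ q = ren f q0.
Proof.
  intros t f q H. inversion H; subst.
  destruct (ren_inv_Sub _ _ _ _ (eq_sym H1)) as [x [v0 [-> [Hx ->]]]].
  symmetry in Hx. destruct (ren_inv_Sub _ _ _ _ Hx) as [x1 [y1 [-> [-> Hy]]]].
  symmetry in Hy. destruct (lift_reflect _ _ _ Hy) as [s0 [-> ->]].
  exists (Sub (Sub (swap 0 x1) (lift 0 v0)) s0). split; [apply cs_perm|].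
  simpl. rewrite ren_lift0, ren_swap0. reflexivity.
Qed.

Lemma cs_ax_reflect_r : forall t f p, cs_ax p (ren f t) ->
  exists p0, cs_ax p0 t /\ p = ren f p0.
Proof.
  intros t f p H. apply cs_ax_sym in H. destruct (cs_ax_reflect_l _ _ _ H) as [q [H1 H2]].
  exists q; split; auto. apply cs_ax_sym; auto.
Qed.

Ltac occ_arith := simpl occ in *;
  rewrite ?occ_lift0_0, ?occ_lift2_1, ?occ_swap0_0, ?occ_swap0_1,
          ?occ_swap10, ?occ_swap01 in *; lia.

Ltac split_as_merge :=
  match goal with Hsp : Defs.split _ _ _ |- _ => apply split_iff in Hsp end.

(* The critical pairs of the [CS] equation, stated for every [R]
   containing it so that they also serve [≡o]. *)
Section CSCriticalPairs.

Variable R : term -> term -> Prop.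
Hypothesis HR : forall a b, cs_ax a b -> R a b.

Lemma swap0_upn_liftn : forall n V,
  ren (upn n (swapv 0)) (liftn (S (S n)) V) = liftn (S (S n)) V.
Proof.
  intros. rewrite liftn_ren, ren_comp. apply ren_ext. intros m. rewrite upn_spec.
  nat_cases; try lia. replace (S (S n) + m - n) with (S (S m)) by lia. unfold swapv. simpl. lia.
Qed.

(* Permuting two jumps of [(λx.a) L] permutes the same two jumps of the
   contracted dB-redex. *)
Lemma cs_ax_dB : forall a L u, cs_ax (jumps (Lam a) L) u ->
  exists a' L', u = jumps (Lam a') L' /\
    forall v, ctx_equiv R (jumps (Sub a (liftn (length L) v)) L)
                          (jumps (Sub a' (liftn (length L') v)) L').
Proof.
  intros a L u H. inversion H; subst.
  destruct (jumps_Sub_inv _ _ _ _ (eq_sym H1)) as [L0 [-> H2]].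
  destruct (jumps_Sub_inv _ _ _ _ (eq_sym H2)) as [L1 [-> ->]].
  exists (ren (up (upn (length L1) (swapv 0))) a), ((renL (swapv 0) L1 ++ [lift 0 v]) ++ [s]).
  split.
  - rewrite !jumps_app1, swap_ren, ren_jumps. reflexivity.
  - intros V. rewrite !jumps_app1, !length_app, length_renL. simpl.
    replace (jumps (Sub (ren (up (upn (length L1) (swapv 0))) a)
                        (liftn (length L1 + 1 + 1) V)) (renL (swapv 0) L1))
      with (swap 0 (jumps (Sub a (liftn (length L1 + 1 + 1) V)) L1)).
    + apply e_base, HR, cs_perm.
    + rewrite swap_ren, ren_jumps. simpl. f_equal. f_equal.
      rewrite !Nat.add_1_r. apply swap0_upn_liftn.
Qed.

(* Duplicating the outer jump [y/v], then moving the inner jump [x/s]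
   outwards past both copies. *)
Lemma cs_dup_outer_equiv : forall t' s v,
  ctx_equiv R (Sub (Sub (Sub t' (lift 0 (lift 0 s))) (lift 0 v)) v)
              (Sub (Sub (Sub (swap 1 (swap 0 t')) (lift 0 (lift 0 v))) (lift 0 v)) s).
Proof.
  intros. eapply e_trans.
  - apply e_subl, e_base, HR, (cs_perm t' (lift 0 s) (lift 0 v)).
  - apply e_base, HR. generalize (cs_perm (Sub (swap 0 t') (lift 0 (lift 0 v))) s v).
    simpl. rewrite swap0_lift2. auto.
Qed.

(* Duplicating the inner jump [x/s], then moving [y/v] inwards past both
   copies. *)
Lemma cs_dup_inner_equiv : forall t' s v,
  ctx_equiv R (Sub (Sub (Sub t' (lift 0 (lift 0 s))) (lift 0 s)) v)
              (Sub (Sub (Sub (swap 0 (swap 1 t')) (lift 0 (lift 0 v))) (lift 0 s)) s).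
Proof.
  intros. eapply e_trans.
  - apply e_base, HR.
    generalize (cs_perm (Sub t' (lift 0 (lift 0 s))) s v). simpl. rewrite swap0_lift2. intro X; exact X.
  - apply e_subl, e_base, HR, (cs_perm (swap 1 t') (lift 0 s) (lift 0 v)).
Qed.

Lemma cs_outer_root_simulates : forall t s v w,
  lj_root (Sub (Sub t (lift 0 s)) v) w ->
  exists w', lj_step (Sub (Sub (swap 0 t) (lift 0 v)) s) w' /\ ctx_equiv R w w'.
Proof.
  intros t s v w H. inversion H; subst.
  - eexists; split; [apply s_subl, s_root, r_w; occ_arith|].
    simpl. rewrite subst_lift0, subst_swap. apply e_refl.
  - eexists; split; [apply s_subl, s_root, r_d; occ_arith|].
    simpl. rewrite subst_lift0, subst_swap. apply e_refl.
  - rename t' into T'. split_as_merge.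
    match goal with Hsp : ren _ T' = _ |- _ =>
      destruct (ren_inv_Sub _ _ _ _ Hsp) as [t' [S' [-> [Ht HS]]]] end.
    symmetry in HS. apply merge_lift_reflect in HS. subst S' t.
    eexists; split; [|apply cs_dup_outer_equiv].
    apply s_subl, s_root, r_c; try occ_arith. apply split_iff, merge_swap10.
Qed.

Lemma cs_inner_root_simulates : forall t s v w,
  lj_root (Sub t (lift 0 s)) w ->
  exists w', lj_step (Sub (Sub (swap 0 t) (lift 0 v)) s) w' /\ ctx_equiv R (Sub w v) w'.
Proof.
  intros t s v w H. inversion H; subst.
  - eexists; split; [apply s_root, r_w; occ_arith|].
    simpl. rewrite subst_lift0, subst_swap0_back. apply e_refl.
  - eexists; split; [apply s_root, r_d; occ_arith|].
    simpl. rewrite subst_lift0, subst_swap0_back. apply e_refl.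
  - split_as_merge. subst t.
    eexists; split; [|apply cs_dup_inner_equiv].
    apply s_root, r_c; try occ_arith.
    apply split_iff. simpl. rewrite merge_swap01, merge_lift2. reflexivity.
Qed.

Lemma cs_ax_simulates : forall t s v,
  simulates R (Sub (Sub t (lift 0 s)) v) (Sub (Sub (swap 0 t) (lift 0 v)) s).
Proof.
  intros t s v w Hs. inversion Hs; subst.
  - apply cs_outer_root_simulates; auto.
  - match goal with Hx : lj_step (Sub t (lift 0 s)) _ |- _ => inversion Hx; subst end.
    + apply cs_inner_root_simulates; auto.
    + eexists; split; [apply s_subl, s_subl, step_swap; eauto|].
      apply e_base, HR, cs_perm.
    + match goal with Hx : lj_step (lift 0 s) _ |- _ =>
        destruct (step_lift_reflect _ _ Hx) as [s' [Hs' ->]] end.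
      eexists; split; [apply s_subr; eauto|]. apply e_base, HR, cs_perm.
  - eexists; split; [apply s_subl, s_subr, step_lift; eauto|]. apply e_base, HR, cs_perm.
Qed.

Lemma cs_ax_root : forall a b, cs_ax a b -> simulates R a b /\ simulates R b a.
Proof.
  intros a b []. split; [apply cs_ax_simulates|].
  pose proof (cs_ax_simulates (swap 0 t) v s) as H. rewrite swap_inv in H. auto.
Qed.

End CSCriticalPairs.

Lemma cs_admissible : admissible cs_ax.
Proof.
  constructor.
  - apply cs_ax_ren.
  - apply cs_ax_subst.
  - apply cs_ax_occ.
  - apply cs_ax_reflect_l.
  - apply cs_ax_reflect_r.
  - apply cs_ax_root; auto.
  - intros a L u [H|H]; apply cs_ax_dB; auto. apply cs_ax_sym; auto.
Qed.

Lemma o_ax_ren : forall a b f, o_ax a b -> o_ax (ren f a) (ren f b).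
Proof.
  intros a b f H. destruct H.
  - apply o_cs, cs_ax_ren; auto.
  - simpl. rewrite ren_lift0, ren_swap0. apply o_lam.
  - simpl. rewrite ren_lift0. apply o_app.
Qed.

Lemma o_ax_subst : forall a b k w, o_ax a b -> o_ax (subst k w a) (subst k w b).
Proof.
  intros a b k w H. destruct H.
  - apply o_cs, cs_ax_subst; auto.
  - simpl. rewrite subst_lift0_comm, subst_swap0_comm by apply swap0_lift2. apply o_lam.
  - simpl. rewrite subst_lift0_comm. apply o_app.
Qed.

Lemma o_ax_occ : forall a b n, o_ax a b -> occ n a = occ n b.
Proof.
  intros a b n H. destruct H.
  - apply cs_ax_occ; auto.
  - simpl. rewrite occ_lift0_S, occ_swap0_SS. lia.
  - simpl. rewrite occ_lift0_S. lia.
Qed.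

Lemma o_ax_reflect_l : forall t f q, o_ax (ren f t) q ->
  exists q0, o_ax t q0 /\ q = ren f q0.
Proof.
  intros t f q H. inversion H; subst.
  - destruct (cs_ax_reflect_l _ _ _ H0) as [q0 [H1 H2]].
    exists q0; split; auto. apply o_cs; auto.
  - destruct (ren_inv_Lam _ _ _ (eq_sym H1)) as [x [-> Hx]].
    symmetry in Hx. destruct (ren_inv_Sub _ _ _ _ Hx) as [x1 [y1 [-> [-> Hy]]]].
    symmetry in Hy. destruct (lift_reflect _ _ _ Hy) as [s0 [-> ->]].
    exists (Sub (Lam (swap 0 x1)) s0). split; [apply o_lam|].
    simpl. rewrite ren_swap0. reflexivity.
  - destruct (ren_inv_App _ _ _ _ (eq_sym H1)) as [x [v0 [-> [Hx ->]]]].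
    symmetry in Hx. destruct (ren_inv_Sub _ _ _ _ Hx) as [x1 [s0 [-> [-> ->]]]].
    exists (Sub (App x1 (lift 0 v0)) s0). split; [apply o_app|].
    simpl. rewrite ren_lift0. reflexivity.
Qed.

Lemma o_ax_reflect_r : forall t f p, o_ax p (ren f t) ->
  exists p0, o_ax p0 t /\ p = ren f p0.
Proof.
  intros t f p H. inversion H as [? ? Hcs| |]; subst.
  - destruct (cs_ax_reflect_r _ _ _ Hcs) as [q0 [H1 H2]].
    exists q0; split; auto. apply o_cs; auto.
  - match goal with Hq : _ = ren f t |- _ => rename Hq into Heq end.
    destruct (ren_inv_Sub _ _ _ _ (eq_sym Heq)) as [x [s0 [-> [Hx ->]]]].
    symmetry in Hx. destruct (ren_inv_Lam _ _ _ Hx) as [x1 [-> Hy]].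
    exists (Lam (Sub (swap 0 x1) (lift 0 s0))). split.
    + pose proof (o_lam (swap 0 x1) s0) as Ho. rewrite swap_inv in Ho. auto.
    + simpl. rewrite ren_lift0, ren_swap0, <- Hy, swap_inv. reflexivity.
  - match goal with Hq : _ = ren f t |- _ => rename Hq into Heq end.
    destruct (ren_inv_Sub _ _ _ _ (eq_sym Heq)) as [x [s0 [-> [Hx ->]]]].
    symmetry in Hx. destruct (ren_inv_App _ _ _ _ Hx) as [x1 [y1 [-> [-> Hy]]]].
    symmetry in Hy. destruct (lift_reflect _ _ _ Hy) as [v0 [-> ->]].
    exists (App (Sub x1 s0) v0). split; [apply o_app | reflexivity].
Qed.

(* Besides the [CS] case, only the [λ]-equation relates terms of the shape
   [(λx.a) L]: it moves the last jump under the abstraction. *)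
Lemma o_ax_dB : forall a L u, sym_clos o_ax (jumps (Lam a) L) u ->
  exists a' L', u = jumps (Lam a') L' /\
    forall v, ctx_equiv o_ax (jumps (Sub a (liftn (length L) v)) L)
                             (jumps (Sub a' (liftn (length L') v)) L').
Proof.
  intros a L u [H|H]; inversion H; subst;
  try match goal with Hq : _ = jumps _ _ |- _ => symmetry in Hq; rename Hq into Heq end.
  - apply (cs_ax_dB o_ax o_cs); auto.
  - destruct (jumps_Lam_inv _ _ _ Heq) as [-> ->].
    exists (swap 0 t), [s]. split; auto. intros v. simpl. apply e_base, o_cs, cs_perm.
  - exfalso; eapply jumps_App_inv; eauto.
  - apply (cs_ax_dB o_ax o_cs); auto. apply cs_ax_sym; auto.
  - destruct (jumps_Sub_inv _ _ _ _ Heq) as [L0 [-> H3]].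
    destruct (jumps_Lam_inv _ _ _ (eq_sym H3)) as [-> ->].
    exists (Sub t (lift 0 s)), []. split; auto.
    intros v. simpl. apply e_base, o_cs, cs_ax_sym, cs_perm.
  - destruct (jumps_Sub_inv _ _ _ _ Heq) as [L0 [-> H3]].
    exfalso; eapply jumps_App_inv; eauto.
Qed.

(* Duplicating [x/s] under [λy], then moving both copies out of [λy]. *)
Lemma o_lam_dup_equiv : forall t' s,
  ctx_equiv o_ax (Lam (Sub (Sub t' (lift 0 (lift 0 s))) (lift 0 s)))
                 (Sub (Sub (Lam (swap 0 (swap 1 t'))) (lift 0 s)) s).
Proof.
  intros. eapply e_trans.
  - apply e_base. generalize (o_lam (Sub t' (lift 0 (lift 0 s))) s).
    simpl. rewrite swap0_lift2. intro X; exact X.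
  - apply e_subl, e_base, (o_lam (swap 1 t') (lift 0 s)).
Qed.

(* Duplicating [x/s] in the function, then moving both copies out of the
   application. *)
Lemma o_app_dup_equiv : forall t' s v,
  ctx_equiv o_ax (App (Sub (Sub t' (lift 0 s)) s) v)
                 (Sub (Sub (App t' (lift 0 (lift 0 v))) (lift 0 s)) s).
Proof.
  intros. eapply e_trans.
  - apply e_base, (o_app (Sub t' (lift 0 s)) s v).
  - apply e_subl, e_base, (o_app t' (lift 0 s) (lift 0 v)).
Qed.

Lemma o_lam_simulates_lr : forall t s,
  simulates o_ax (Lam (Sub t (lift 0 s))) (Sub (Lam (swap 0 t)) s).
Proof.
  intros t s w Hs. inversion Hs; subst.
  - match goal with Hx : lj_root (Lam _) _ |- _ => inversion Hx end.
  - match goal with Hx : lj_step (Sub t (lift 0 s)) _ |- _ => inversion Hx; subst end.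
    + match goal with Hx : lj_root (Sub t (lift 0 s)) _ |- _ => inversion Hx; subst end.
      * eexists; split; [apply s_root, r_w; occ_arith|].
        simpl. rewrite subst_swap0_back. apply e_refl.
      * eexists; split; [apply s_root, r_d; occ_arith|].
        simpl. rewrite subst_swap0_back. apply e_refl.
      * split_as_merge. subst t.
        eexists; split; [|apply o_lam_dup_equiv].
        apply s_root, r_c; try occ_arith.
        apply split_iff. simpl. rewrite merge_swap01. reflexivity.
    + eexists; split; [apply s_subl, s_lam, step_swap; eauto|]. apply e_base, o_lam.
    + match goal with Hx : lj_step (lift 0 s) _ |- _ =>
        destruct (step_lift_reflect _ _ Hx) as [s' [Hs' ->]] end.
      eexists; split; [apply s_subr; eauto|]. apply e_base, o_lam.
Qed.

Lemma o_lam_simulates_rl : forall t s,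
  simulates o_ax (Sub (Lam (swap 0 t)) s) (Lam (Sub t (lift 0 s))).
Proof.
  intros t s w Hs. inversion Hs; subst.
  - inversion H; subst.
    + eexists; split; [apply s_lam, s_root, r_w; occ_arith|].
      simpl. rewrite subst_swap0_back. apply e_refl.
    + eexists; split; [apply s_lam, s_root, r_d; occ_arith|].
      simpl. rewrite subst_swap0_back. apply e_refl.
    + (* a split of [λy.t] is [λy.t''], with [t] a merge of [swap 1 (swap 0 t'')] *)
      rename t' into T. split_as_merge.
      match goal with Hq : ren _ T = _ |- _ =>
        destruct (ren_inv_Lam _ _ _ Hq) as [t'' [-> Ht]] end.
      set (t' := swap 1 (swap 0 t'')).
      assert (E1 : ren (merge 0) t' = t).
      { unfold t'. rewrite merge_swap10, <- Ht, swap_inv. reflexivity. }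
      assert (E2 : t'' = swap 0 (swap 1 t')). { unfold t'. rewrite !swap_inv. reflexivity. }
      assert (E3 : occ 1 t' = occ 2 t''). { unfold t'. apply occ_swap10. }
      exists (Lam (Sub (Sub t' (lift 0 (lift 0 s))) (lift 0 s))). split.
      * apply s_lam, s_root, r_c; [occ_arith | apply split_iff; auto | |];
          rewrite E3; occ_arith.
      * rewrite E2. apply e_sym, o_lam_dup_equiv.
  - match goal with Hx : lj_step (Lam (swap 0 t)) _ |- _ => inversion Hx; subst end.
    + match goal with Hx : lj_root (Lam _) _ |- _ => inversion Hx end.
    + match goal with Hx : lj_step (swap 0 t) ?w0 |- _ =>
        rename w0 into w1; pose proof (step_swap _ _ Hx) as Hy end.
      rewrite swap_inv in Hy.
      exists (Lam (Sub (swap 0 w1) (lift 0 s))). split; [apply s_lam, s_subl; auto|].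
      apply e_sym. generalize (o_lam (swap 0 w1) s). rewrite swap_inv. apply e_base.
  - eexists; split; [apply s_lam, s_subr, step_lift; eauto|]. apply e_sym, e_base, o_lam.
Qed.

Lemma o_app_simulates_lr : forall t s v,
  simulates o_ax (App (Sub t s) v) (Sub (App t (lift 0 v)) s).
Proof.
  intros t s v w Hs. inversion Hs; subst.
  - (* a dB-redex under jumps: [(λx.a) L [x'/s] v] *)
    inversion H; subst.
    match goal with Hq : jumps _ _ = Sub t s |- _ =>
      destruct (jumps_Sub_inv _ _ _ _ Hq) as [L0 [-> ->]] end.
    eexists; split; [apply s_subl, s_root, r_dB|].
    rewrite jumps_app1, length_app, Nat.add_1_r, <- liftn_S. apply e_refl.
  - match goal with Hx : lj_step (Sub t s) _ |- _ => inversion Hx; subst end.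
    + match goal with Hx : lj_root (Sub t s) _ |- _ => inversion Hx; subst end.
      * eexists; split; [apply s_root, r_w; occ_arith|].
        simpl. rewrite subst_lift0. apply e_refl.
      * eexists; split; [apply s_root, r_d; occ_arith|].
        simpl. rewrite subst_lift0. apply e_refl.
      * split_as_merge. subst t.
        eexists; split; [|apply o_app_dup_equiv].
        apply s_root, r_c; try occ_arith.
        apply split_iff. simpl. rewrite merge_lift2. reflexivity.
    + eexists; split; [apply s_subl, s_appl; eauto|]. apply e_base, o_app.
    + eexists; split; [apply s_subr; eauto|]. apply e_base, o_app.
  - eexists; split; [apply s_subl, s_appr, step_lift; eauto|]. apply e_base, o_app.
Qed.

Lemma o_app_simulates_rl : forall t s v,
  simulates o_ax (Sub (App t (lift 0 v)) s) (App (Sub t s) v).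
Proof.
  intros t s v w Hs. inversion Hs; subst.
  - inversion H; subst.
    + eexists; split; [apply s_appl, s_root, r_w; occ_arith|].
      simpl. rewrite subst_lift0. apply e_refl.
    + eexists; split; [apply s_appl, s_root, r_d; occ_arith|].
      simpl. rewrite subst_lift0. apply e_refl.
    + rename t' into T. split_as_merge.
      match goal with Hq : ren _ T = _ |- _ =>
        destruct (ren_inv_App _ _ _ _ Hq) as [t' [V' [-> [Ht HV]]]] end.
      symmetry in HV. apply merge_lift_reflect in HV. subst V' t.
      exists (App (Sub (Sub t' (lift 0 s)) s) v). split.
      * apply s_appl, s_root, r_c; try occ_arith. apply split_iff; auto.
      * apply e_sym, o_app_dup_equiv.
  - match goal with Hx : lj_step (App t (lift 0 v)) _ |- _ => inversion Hx; subst end.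
    + match goal with Hx : lj_root (App t (lift 0 v)) _ |- _ => inversion Hx; subst end.
      eexists; split.
      * rewrite <- jumps_app1. apply s_root, r_dB.
      * rewrite jumps_app1, length_app, Nat.add_1_r, <- liftn_S. apply e_refl.
    + eexists; split; [apply s_appl, s_subl; eauto|]. apply e_sym, e_base, o_app.
    + match goal with Hx : lj_step (lift 0 v) _ |- _ =>
        destruct (step_lift_reflect _ _ Hx) as [v' [Hv' ->]] end.
      eexists; split; [apply s_appr; eauto|]. apply e_sym, e_base, o_app.
  - eexists; split; [apply s_appl, s_subr; eauto|]. apply e_sym, e_base, o_app.
Qed.

Lemma o_ax_root : forall a b, o_ax a b -> simulates o_ax a b /\ simulates o_ax b a.
Proof.
  intros a b H. destruct H.
  - apply cs_ax_root; auto. intros; apply o_cs; auto.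
  - split; [apply o_lam_simulates_lr|apply o_lam_simulates_rl].
  - split; [apply o_app_simulates_lr|apply o_app_simulates_rl].
Qed.

Lemma o_admissible : admissible o_ax.
Proof.
  constructor.
  - apply o_ax_ren.
  - apply o_ax_subst.
  - apply o_ax_occ.
  - apply o_ax_reflect_l.
  - apply o_ax_reflect_r.
  - apply o_ax_root.
  - apply o_ax_dB.
Qed.

Theorem lemma23 :
  strong_bisimulation lj_step equiv_CS /\ strong_bisimulation lj_step equiv_o.
Proof.
  split.
  - apply admissible_bisim, cs_admissible.
  - apply admissible_bisim, o_admissible.
Qed.
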